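(* Let $p,q\in\mathbb N$ with $\gcd(p,q)=1$ and suppose $\alpha=\sqrt{p/q}$ is irrational. (1) If the equation $x^2-pqy^2=-1$ has no integer solution, then for $A\in GL(2,\mathbb Z)$, $\pi(A)$ restricts to an isometric automorphism of $\mathcal A_\alpha$ if and only if $A=\begin{bmatrix} x_1&qy_1\\ py_1&x_1\end{bmatrix}^n$ for some $n\in\mathbb Z$, where $(x_1,y_1)$ is the fundamental solution of $x^2-pqy^2=1$. (2) If $x^2-pqy^2=-1$ has an integer solution, then for $A\in GL(2,\mathbb Z)$, $\pi(A)$ restricts to an isometric automorphism of $\mathcal A_\alpha$ if and only if $A=\begin{bmatrix} x_1'&qy_1'\\ py_1'&x_1'\end{bmatrix}^n$ for some $n\in\mathbb Z$, where $(x_1',y_1')$ is the fundamental solution of $x^2-pqy^2=-1$.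
   Context: For a positive irrational $\alpha$, $\mathcal A_\alpha=\{f\in C(\mathbb T^2): \hat f(m,n)=0 \text{ whenever } m+\alpha n<0\}$ ($\mathbb T$ the unit circle, $\hat f$ the Fourier transform on $\mathbb Z^2$), a uniform algebra with the sup norm. For $A=\begin{bmatrix} a&b\\ c&d\end{bmatrix}\in GL(2,\mathbb Z)$, $\pi(A)(f)=f\circ\varphi$ with $\varphi(z,w)=(z^aw^b,z^cw^d)$. For a positive nonsquare integer $N$ and $e\in\{1,-1\}$, the fundamental solution of $x^2-Ny^2=e$ (when a solution exists) is the solution $(x_1,y_1)$ in positive integers with $x_1$ smallest. *)

From Stdlib Require Export Reals ZArith.
Open Scope R_scope.

(** * The torus and C(T^2)
    A point of T^2 is written (e^{is}, e^{it}); a function on T^2 is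
    represented by its pull-back F : R -> R -> C, 2*PI-periodic in each
    variable, where C is represented as R * R (real part, imaginary part). *)

Definition cfun := R -> R -> (R * R).

Definition Cmod (z : R * R) : R := sqrt (fst z * fst z + snd z * snd z).

Definition periodic2 (f : cfun) : Prop :=
  forall s t, f (s + 2 * PI) t = f s t /\ f s (t + 2 * PI) = f s t.

Definition continuous2 (f : cfun) : Prop :=
  forall s t eps, 0 < eps -> exists delta, 0 < delta /\
    forall s' t', Rabs (s' - s) < delta -> Rabs (t' - t) < delta ->
      Rabs (fst (f s' t') - fst (f s t)) < eps /\
      Rabs (snd (f s' t') - snd (f s t)) < eps.

Definition in_CT2 (f : cfun) : Prop := periodic2 f /\ continuous2 f.

Definition Rint (g : R -> R) (v : R) : Prop :=
  exists pr : Riemann_integrable g 0 (2 * PI), RiemannInt pr = v.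

Definition Rint2 (G : R -> R -> R) (v : R) : Prop :=
  exists h : R -> R, (forall t, Rint (fun s => G s t) (h t)) /\ Rint h v.

(** hat f (m,n) = (1/4pi^2) int int f(s,t) e^{-i(ms+nt)} ds dt  equals 0.
    With f = u + i v and e^{-i th} = cos th - i sin th, the real part of the
    integrand is u cos + v sin and the imaginary part is v cos - u sin. *)
Definition fourier_zero (f : cfun) (m n : Z) : Prop :=
  let th s t := IZR m * s + IZR n * t in
  Rint2 (fun s t => fst (f s t) * cos (th s t) + snd (f s t) * sin (th s t)) 0 /\
  Rint2 (fun s t => snd (f s t) * cos (th s t) - fst (f s t) * sin (th s t)) 0.

Definition in_A (alpha : R) (f : cfun) : Prop :=
  in_CT2 f /\
  forall m n : Z, IZR m + alpha * IZR n < 0 -> fourier_zero f m n.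

Record mat2 := Mat2 { m11 : Z; m12 : Z; m21 : Z; m22 : Z }.

Definition mdet (A : mat2) : Z := (m11 A * m22 A - m12 A * m21 A)%Z.

Definition in_GL2Z (A : mat2) : Prop := mdet A = 1%Z \/ mdet A = (-1)%Z.

Definition mmul (A B : mat2) : mat2 :=
  Mat2 (m11 A * m11 B + m12 A * m21 B)%Z (m11 A * m12 B + m12 A * m22 B)%Z
       (m21 A * m11 B + m22 A * m21 B)%Z (m21 A * m12 B + m22 A * m22 B)%Z.

Definition mid : mat2 := Mat2 1 0 0 1.

(** inverse of a matrix of determinant +-1 (then 1/det = det) *)
Definition minv (A : mat2) : mat2 :=
  let e := mdet A in
  Mat2 (e * m22 A)%Z (- (e * m12 A))%Z (- (e * m21 A))%Z (e * m11 A)%Z.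

Fixpoint mpow_nat (A : mat2) (k : nat) : mat2 :=
  match k with O => mid | S k' => mmul A (mpow_nat A k') end.

(** A ^ n for n : Z (used only for A in GL(2,Z)) *)
Definition mzpow (A : mat2) (n : Z) : mat2 :=
  match n with
  | Z0 => mid
  | Zpos k => mpow_nat A (Pos.to_nat k)
  | Zneg k => mpow_nat (minv A) (Pos.to_nat k)
  end.

(** pi(A) f = f o phi,  phi(z,w) = (z^a w^b, z^c w^d);
    at z = e^{is}, w = e^{it}: phi = (e^{i(as+bt)}, e^{i(cs+dt)}). *)
Definition piA (A : mat2) (f : cfun) : cfun :=
  fun s t => f (IZR (m11 A) * s + IZR (m12 A) * t) (IZR (m21 A) * s + IZR (m22 A) * t).

(** pi(A) restricts to an isometric automorphism of A_alpha:
    it maps A_alpha into A_alpha, onto A_alpha, and preserves sup norms.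
    (Linearity and multiplicativity hold by definition of composition.) *)
Definition restricts_iso_auto (alpha : R) (A : mat2) : Prop :=
  (forall f, in_A alpha f -> in_A alpha (piA A f)) /\
  (forall g, in_A alpha g -> exists f, in_A alpha f /\ piA A f = g) /\
  (forall f, in_A alpha f -> forall M : R,
      (forall s t, Cmod (f s t) <= M) <-> (forall s t, Cmod (piA A f s t) <= M)).

Definition irrational (x : R) : Prop :=
  ~ exists a b : Z, b <> 0%Z /\ x = IZR a / IZR b.

Definition fundamental (N e x1 y1 : Z) : Prop :=
  (0 < x1)%Z /\ (0 < y1)%Z /\ (x1 * x1 - N * y1 * y1 = e)%Z /\
  forall x y : Z, (0 < x)%Z -> (0 < y)%Z -> (x * x - N * y * y = e)%Z -> (x1 <= x)%Z.

From Coquelicot Require Import Coquelicot.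
From Stdlib Require Import Lra Lia Psatz FunctionalExtensionality.
Open Scope R_scope.

(* pi(A) sends the character z^j w^k to z^(aj+ck) w^(bj+dk), and for A in GL(2,Z) the
   substitution (s, t) |-> (as + bt, cs + dt) preserves integrals of periodic functions over
   [0, 2 PI]^2 (check it on generators: shears, the swap, a reflection).  Hence pi(A) maps
   A_alpha into itself iff A^T maps the integer half-plane j + alpha k >= 0 into itself, which,
   alpha being irrational, means that (1, alpha) is an eigenvector of A with eigenvalue
   lambda = a + alpha b > 0; the inverse matrix then gives surjectivity, and composition with a
   bijection preserves sup norms.  For alpha = sqrt(p/q) these matrices are exactly
   [[x, qy], [py, x]] with x^2 - pq y^2 = +-1 and lambda = x + y sqrt(pq), and the units
   lambda > 0 of the admissible norms form the cyclic group generated by the smallest one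
   above 1, which is the fundamental solution. *)

Definition continuity_2d (G : R -> R -> R) : Prop := forall x y, continuity_2d_pt G x y.

Lemma continuity_2d_pt_slice G x y :
  continuity_2d_pt G x y -> continuity_pt (fun u => G u y) x.
Proof.
  intros H eps Heps. destruct (H (mkposreal eps Heps)) as [d Hd].
  exists d. split; [apply cond_pos|]. intros z [_ Hz]. simpl in *. unfold R_dist in *.
  apply Hd; [exact Hz|]. rewrite Rminus_diag, Rabs_R0. apply cond_pos.
Qed.

Lemma continuity_2d_swap G : continuity_2d G -> continuity_2d (fun s t => G t s).
Proof.
  intros H x y eps. destruct (H y x eps) as [d Hd]. exists d. intros u v Hu Hv. apply Hd; auto.
Qed.

Lemma ex_RInt_continuity g a b : continuity g -> ex_RInt g a b.
Proof.
  intros H. apply (ex_RInt_continuous (V:=R_CompleteNormedModule)). intros z _.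
  apply continuity_pt_filterlim, H.
Qed.

Lemma ex_RInt_slice G t a b : continuity_2d G -> ex_RInt (fun s => G s t) a b.
Proof. intros H. apply ex_RInt_continuity. intros x. apply continuity_2d_pt_slice, H. Qed.

Lemma continuity_RInt_param_le G a b t0 : continuity_2d G -> a <= b ->
  continuity_pt (fun t => RInt (fun s => G s t) a b) t0.
Proof.
  intros HG Hab eps Heps.
  assert (He' : 0 < eps / (b - a + 1)) by (apply Rdiv_lt_0_compat; lra).
  destruct (uniform_continuity_2d G a b (t0 - 1) (t0 + 1)
     (fun x y _ _ => HG x y) (mkposreal _ He')) as [d Hd].
  exists (Rmin d 1). split; [apply Rmin_pos; [apply cond_pos|lra]|].
  intros t [_ Ht]. simpl in *. unfold R_dist in *.
  assert (Htd := Rlt_le_trans _ _ _ Ht (Rmin_l d 1)).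
  assert (Ht1 := Rlt_le_trans _ _ _ Ht (Rmin_r d 1)).
  apply Rabs_lt_between' in Ht1.
  rewrite <- (RInt_minus (fun s => G s t) (fun s => G s t0)) by (apply ex_RInt_slice; auto).
  eapply Rle_lt_trans.
  - apply abs_RInt_le_const with (M := eps / (b - a + 1)); auto.
    + apply ex_RInt_minus; apply ex_RInt_slice; auto.
    + intros s Hs. left. apply (Hd s t0 s t); try lra.
      all: rewrite ?Rminus_diag, ?Rabs_R0; auto using cond_pos.
  - apply Rmult_lt_reg_r with (b - a + 1); [lra|].
    replace ((b - a) * (eps / (b - a + 1)) * (b - a + 1)) with ((b - a) * eps) by (field; lra).
    nra.
Qed.

Lemma continuity_RInt_param G a b : continuity_2d G ->
  continuity (fun t => RInt (fun s => G s t) a b).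
Proof.
  intros HG t0. destruct (Rle_dec a b) as [H|H].
  - apply continuity_RInt_param_le; auto.
  - apply continuity_pt_ext with (f := fun t => - RInt (fun s => G s t) b a).
    + intros t. rewrite <- (opp_RInt_swap (fun s => G s t)) by (apply ex_RInt_slice; auto).
      apply Ropp_involutive.
    + apply continuity_pt_opp, continuity_RInt_param_le; auto; lra.
Qed.

Lemma is_derive_RInt_upper G t x : continuity_2d G ->
  is_derive (fun u => RInt (fun s => G s t) 0 u) x (G x t).
Proof.
  intros HG. apply (is_derive_RInt (V:=R_NormedModule) (fun s => G s t) _ 0).
  - apply filter_forall. intros u.
    apply (RInt_correct (V:=R_CompleteNormedModule)), ex_RInt_slice, HG.
  - apply continuity_pt_filterlim, continuity_2d_pt_slice, HG.
Qed.

Definition RInt_square (G : R -> R -> R) : R :=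
  RInt (fun t => RInt (fun s => G s t) 0 (2*PI)) 0 (2*PI).

Lemma RInt_square_ext G H : (forall s t, G s t = H s t) -> RInt_square G = RInt_square H.
Proof.
  intros E. unfold RInt_square. apply RInt_ext. intros t _. apply RInt_ext. intros s _. apply E.
Qed.

(* Both sides equal F (2 PI) for F x := int_0^{2 PI} int_0^x G s t ds dt,
   whose derivative is int_0^{2 PI} G x t dt. *)
Lemma RInt_square_swap G : continuity_2d G -> RInt_square (fun s t => G t s) = RInt_square G.
Proof.
  intros HG.
  set (F := fun x => RInt (fun t => RInt (fun s => G s t) 0 x) 0 (2*PI)).
  assert (HD : forall x, is_derive F x (RInt (fun t => G x t) 0 (2*PI))).
  { intros x.
    assert (H := is_derive_RInt_param (fun x t => RInt (fun s => G s t) 0 x) 0 (2*PI) x).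
    rewrite (RInt_ext _ (fun t => G x t)) in H.
    2:{ intros t _. apply is_derive_unique, is_derive_RInt_upper, HG. }
    apply H.
    - apply filter_forall. intros x0 t _. eexists. apply is_derive_RInt_upper, HG.
    - intros t _. apply continuity_2d_pt_ext with (f := G); [|apply HG].
      intros u v. symmetry. apply is_derive_unique, is_derive_RInt_upper, HG.
    - apply filter_forall. intros y. apply ex_RInt_continuity, continuity_RInt_param, HG. }
  assert (HF0 : F 0 = 0).
  { unfold F. rewrite (RInt_ext _ (fun _ => 0)).
    - rewrite RInt_const. apply (scal_zero_r (V:=R_NormedModule)).
    - intros t _. apply (RInt_point (V:=R_CompleteNormedModule)). }
  transitivity (minus (F (2*PI)) (F 0)).
  - apply is_RInt_unique, (is_RInt_derive (V:=R_CompleteNormedModule)).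
    + intros x _. apply HD.
    + intros x _. apply continuity_pt_filterlim.
      apply (continuity_RInt_param (fun s t => G t s)), continuity_2d_swap, HG.
  - rewrite HF0. unfold minus, plus, opp; simpl. rewrite Ropp_0, Rplus_0_r. reflexivity.
Qed.

Lemma RInt_shift g c a b : continuity g ->
  RInt (fun x => g (x + c)) a b = RInt g (a + c) (b + c).
Proof.
  intros H. rewrite <- (Rmult_1_l a), <- (Rmult_1_l b) at 2.
  rewrite <- (RInt_comp_lin (V:=R_CompleteNormedModule)) by (apply ex_RInt_continuity, H).
  apply RInt_ext. intros x _. unfold scal; simpl; unfold mult; simpl. rewrite !Rmult_1_l. reflexivity.
Qed.

Lemma RInt_opp_arg g a b : continuity g ->
  RInt (fun x => g (- x)) a b = - RInt g (- a) (- b).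
Proof.
  intros H. assert (E := RInt_comp_lin (V:=R_CompleteNormedModule) g (-1) 0 a b).
  replace (-1 * a + 0) with (- a) in E by ring. replace (-1 * b + 0) with (- b) in E by ring.
  rewrite <- E by (apply ex_RInt_continuity, H).
  rewrite <- (Ropp_involutive (RInt _ a b)). f_equal.
  rewrite <- (RInt_opp (V:=R_CompleteNormedModule)).
  - apply RInt_ext. intros x _. unfold scal, opp; simpl; unfold mult; simpl.
    replace (-1 * x + 0) with (- x) by ring. ring.
  - apply ex_RInt_continuity. intros x.
    apply (continuity_pt_comp Ropp g); [apply continuity_pt_opp, continuity_pt_id|apply H].
Qed.

Section PeriodicIntegral.
Variable g : R -> R.
Hypothesis g_cont : continuity g.
Hypothesis g_per : forall x, g (x + 2*PI) = g x.

Let RInt_Chasles_g a b c : RInt g a b + RInt g b c = RInt g a c.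
Proof. apply (RInt_Chasles (V:=R_CompleteNormedModule)); apply ex_RInt_continuity, g_cont. Qed.

Lemma RInt_periodic_shift c : RInt (fun s => g (s + c)) 0 (2*PI) = RInt g 0 (2*PI).
Proof.
  rewrite RInt_shift, Rplus_0_l by exact g_cont.
  assert (Hper : RInt g (2*PI) (2*PI + c) = RInt g 0 c).
  { replace (2*PI) with (0 + 2*PI) at 1 by ring. replace (2*PI + c) with (c + 2*PI) by ring.
    rewrite <- RInt_shift by exact g_cont. apply RInt_ext. intros x _. apply g_per. }
  rewrite <- (RInt_Chasles_g c 0 (2*PI + c)), <- (RInt_Chasles_g 0 (2*PI) (2*PI + c)), Hper.
  rewrite <- (opp_RInt_swap (V:=R_CompleteNormedModule)) by (apply ex_RInt_continuity, g_cont).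
  unfold opp; simpl. ring.
Qed.

Lemma RInt_periodic_opp : RInt (fun s => g (- s)) 0 (2*PI) = RInt g 0 (2*PI).
Proof.
  rewrite RInt_opp_arg, Ropp_0 by exact g_cont.
  rewrite <- (opp_RInt_swap (V:=R_CompleteNormedModule)) by (apply ex_RInt_continuity, g_cont).
  unfold opp; simpl. rewrite Ropp_involutive.
  rewrite <- (RInt_periodic_shift (- (2*PI))), RInt_shift by exact g_cont.
  f_equal; ring.
Qed.

End PeriodicIntegral.

Definition periodic_2d {T : Type} (G : R -> R -> T) : Prop :=
  forall s t, G (s + 2*PI) t = G s t /\ G s (t + 2*PI) = G s t.

Lemma periodic_IZR {T : Type} (g : R -> T) :
  (forall x, g (x + 2*PI) = g x) -> forall k x, g (x + 2*PI*IZR k) = g x.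
Proof.
  intros P k. induction k using Z.peano_ind; intros x.
  - f_equal. simpl. ring.
  - rewrite succ_IZR. replace (x + 2*PI*(IZR k + 1)) with ((x + 2*PI*IZR k) + 2*PI) by ring.
    rewrite P. apply IHk.
  - rewrite <- (P (x + 2*PI*IZR (Z.pred k))), <- Z.sub_1_r, minus_IZR, <- (IHk x).
    f_equal. ring.
Qed.

Lemma periodic_2d_IZR {T : Type} (G : R -> R -> T) : periodic_2d G ->
  forall k l s t, G (s + 2*PI*IZR k) (t + 2*PI*IZR l) = G s t.
Proof.
  intros P k l s t.
  rewrite (periodic_IZR (fun x => G x (t + 2*PI*IZR l))) by (intros; apply P).
  apply (periodic_IZR (G s)). intros; apply P.
Qed.

Definition lin_subst {T : Type} (A : mat2) (G : R -> R -> T) : R -> R -> T :=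
  fun s t => G (IZR (m11 A) * s + IZR (m12 A) * t) (IZR (m21 A) * s + IZR (m22 A) * t).

Lemma lin_subst_mmul {T : Type} A B (G : R -> R -> T) :
  lin_subst (mmul A B) G = lin_subst B (lin_subst A G).
Proof.
  apply functional_extensionality; intros s; apply functional_extensionality; intros t.
  destruct A, B. unfold lin_subst, mmul; simpl. rewrite !plus_IZR, !mult_IZR. f_equal; ring.
Qed.

Lemma lin_subst_mid {T : Type} (G : R -> R -> T) : lin_subst mid G = G.
Proof.
  apply functional_extensionality; intros s; apply functional_extensionality; intros t.
  unfold lin_subst; simpl. f_equal; ring.
Qed.

Lemma periodic_2d_lin_subst {T : Type} A (G : R -> R -> T) :
  periodic_2d G -> periodic_2d (lin_subst A G).
Proof.
  intros P s t. unfold lin_subst.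
  set (u := IZR (m11 A) * s + IZR (m12 A) * t). set (v := IZR (m21 A) * s + IZR (m22 A) * t).
  split.
  - rewrite <- (periodic_2d_IZR G P (m11 A) (m21 A) u v). f_equal; unfold u, v; ring.
  - rewrite <- (periodic_2d_IZR G P (m12 A) (m22 A) u v). f_equal; unfold u, v; ring.
Qed.

Lemma continuity_2d_pt_lin a b x y : continuity_2d_pt (fun s t => a * s + b * t) x y.
Proof.
  apply continuity_2d_pt_plus; apply continuity_2d_pt_mult;
    auto using continuity_2d_pt_const, continuity_2d_pt_id1, continuity_2d_pt_id2.
Qed.

Lemma continuity_2d_lin_subst A G : continuity_2d G -> continuity_2d (lin_subst A G).
Proof.
  intros H x y eps. unfold lin_subst.
  destruct (H (IZR (m11 A) * x + IZR (m12 A) * y) (IZR (m21 A) * x + IZR (m22 A) * y) eps)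
    as [d Hd].
  destruct (continuity_2d_pt_lin (IZR (m11 A)) (IZR (m12 A)) x y d) as [d1 Hd1].
  destruct (continuity_2d_pt_lin (IZR (m21 A)) (IZR (m22 A)) x y d) as [d2 Hd2].
  assert (Hpos : 0 < Rmin d1 d2) by (apply Rmin_pos; apply cond_pos).
  exists (mkposreal _ Hpos). simpl. intros u v Hu Hv.
  apply Hd; [apply Hd1|apply Hd2]; eapply Rlt_le_trans; eauto using Rmin_l, Rmin_r.
Qed.

Definition RInt_square_invariant (A : mat2) : Prop :=
  forall G, continuity_2d G -> periodic_2d G -> RInt_square (lin_subst A G) = RInt_square G.

Lemma RInt_square_invariant_mmul A B :
  RInt_square_invariant A -> RInt_square_invariant B -> RInt_square_invariant (mmul A B).
Proof.
  intros HA HB G HG PG. rewrite lin_subst_mmul, HB.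
  - apply HA; auto.
  - apply continuity_2d_lin_subst; auto.
  - apply periodic_2d_lin_subst; auto.
Qed.

Lemma RInt_square_invariant_shear k : RInt_square_invariant (Mat2 1 k 0 1).
Proof.
  intros G HG PG. unfold RInt_square, lin_subst; simpl. apply RInt_ext. intros t _.
  rewrite <- (RInt_periodic_shift (fun s => G s t)) with (c := IZR k * t).
  - apply RInt_ext. intros s _. f_equal; ring.
  - intros x. apply continuity_2d_pt_slice, HG.
  - intros x. apply PG.
Qed.

Lemma RInt_square_invariant_reflect : RInt_square_invariant (Mat2 (-1) 0 0 1).
Proof.
  intros G HG PG. unfold RInt_square, lin_subst; simpl. apply RInt_ext. intros t _.
  rewrite <- (RInt_periodic_opp (fun s => G s t)).
  - apply RInt_ext. intros s _. f_equal; ring.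
  - intros x. apply continuity_2d_pt_slice, HG.
  - intros x. apply PG.
Qed.

Lemma RInt_square_invariant_swap : RInt_square_invariant (Mat2 0 1 1 0).
Proof.
  intros G HG _. rewrite <- (RInt_square_swap G HG).
  apply RInt_square_ext. intros s t. unfold lin_subst; simpl. f_equal; ring.
Qed.

(* Euclid's algorithm on the first column writes every A in GL(2,Z) as a product of
   shears, the swap and the reflection. *)
Lemma GL2Z_ind (P : mat2 -> Prop) :
  (forall A B, P A -> P B -> P (mmul A B)) ->
  (forall k, P (Mat2 1 k 0 1)) -> P (Mat2 0 1 1 0) -> P (Mat2 (-1) 0 0 1) ->
  forall A, in_GL2Z A -> P A.
Proof.
  intros Pmul Pshear Pswap Prefl.
  assert (Pdiag : forall a d, (a = 1 \/ a = -1)%Z -> (d = 1 \/ d = -1)%Z -> P (Mat2 a 0 0 d)).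
  { assert (Pflip : P (Mat2 1 0 0 (-1))).
    { change (Mat2 1 0 0 (-1)) with (mmul (Mat2 0 1 1 0) (mmul (Mat2 (-1) 0 0 1) (Mat2 0 1 1 0))).
      auto. }
    intros a d [-> | ->] [-> | ->]; auto.
    change (Mat2 (-1) 0 0 (-1)) with (mmul (Mat2 (-1) 0 0 1) (Mat2 1 0 0 (-1))). auto. }
  intros A. remember (Z.abs_nat (m21 A)) as n eqn:Hn. revert A Hn.
  induction n as [n IH] using lt_wf_ind. intros [a b c d] Hn HA; simpl in Hn.
  unfold in_GL2Z, mdet in HA; simpl in HA.
  destruct (Z.eq_dec c 0) as [Hc|Hc].
  - subst c. rewrite Z.mul_0_r, Z.sub_0_r in HA.
    assert (Ha : (a = 1 \/ a = -1)%Z /\ (d = 1 \/ d = -1)%Z).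
    { destruct HA as [HA|HA].
      - split; [apply (Z.eq_mul_1 a d)|apply (Z.eq_mul_1 d a)]; lia.
      - split; [apply (Z.eq_mul_1 a (-d))|apply (Z.eq_mul_1 d (-a))]; lia. }
    destruct Ha as [Ha Hd].
    replace (Mat2 a b 0 d) with (mmul (Mat2 a 0 0 d) (Mat2 1 (a*b) 0 1)); [auto|].
    unfold mmul; simpl. f_equal; try ring. destruct Ha as [-> | ->]; ring.
  - set (k := Z.quot a c). set (r := Z.rem a c).
    assert (Ea : a = (c * k + r)%Z) by (apply Z.quot_rem; auto).
    assert (Hr : (Z.abs r < Z.abs c)%Z) by (apply Z.rem_bound_abs; auto).
    replace (Mat2 a b c d)
      with (mmul (Mat2 1 k 0 1) (mmul (Mat2 0 1 1 0) (Mat2 c d r (b - k*d)))).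
    + apply Pmul, Pmul; auto. apply (IH (Z.abs_nat r)); [lia|reflexivity|].
      unfold in_GL2Z, mdet; simpl. lia.
    + unfold mmul; cbn [m11 m12 m21 m22]. rewrite Ea. f_equal; ring.
Qed.

Lemma RInt_square_invariant_GL2Z A : in_GL2Z A -> RInt_square_invariant A.
Proof.
  apply GL2Z_ind; auto using RInt_square_invariant_mmul, RInt_square_invariant_shear,
    RInt_square_invariant_swap, RInt_square_invariant_reflect.
Qed.

Lemma Rint_RInt g v : Rint g v -> v = RInt g 0 (2*PI).
Proof. intros [pr <-]. symmetry. apply RInt_Reals. Qed.

Lemma Rint_ex_RInt g : ex_RInt g 0 (2*PI) -> Rint g (RInt g 0 (2*PI)).
Proof. intros H. exists (ex_RInt_Reals_0 _ _ _ H). symmetry. apply RInt_Reals. Qed.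

Lemma Rint2_RInt_square G v : continuity_2d G -> (Rint2 G v <-> v = RInt_square G).
Proof.
  intros HG. split.
  - intros [h [Hh Hv]]. rewrite (Rint_RInt _ _ Hv). apply RInt_ext.
    intros t _. apply Rint_RInt, Hh.
  - intros ->. exists (fun t => RInt (fun s => G s t) 0 (2*PI)). split.
    + intros t. apply Rint_ex_RInt, ex_RInt_slice, HG.
    + apply Rint_ex_RInt, ex_RInt_continuity, continuity_RInt_param, HG.
Qed.

Lemma continuous2_iff f :
  continuous2 f <-> continuity_2d (fun s t => fst (f s t)) /\ continuity_2d (fun s t => snd (f s t)).
Proof.
  split.
  - intros H. split; intros x y eps; destruct (H x y eps (cond_pos eps)) as [d [Hd H']];
      exists (mkposreal d Hd); intros u v Hu Hv; apply H'; auto.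
  - intros [H1 H2] s t eps Heps.
    destruct (H1 s t (mkposreal eps Heps)) as [d1 Hd1].
    destruct (H2 s t (mkposreal eps Heps)) as [d2 Hd2].
    exists (Rmin d1 d2). split; [apply Rmin_pos; apply cond_pos|].
    intros s' t' Hs Ht. split; [apply Hd1|apply Hd2];
      eapply Rlt_le_trans; eauto using Rmin_l, Rmin_r.
Qed.

Lemma cos_plus_2PI x : cos (x + 2*PI) = cos x.
Proof. rewrite cos_plus, cos_2PI, sin_2PI. ring. Qed.

Lemma sin_plus_2PI x : sin (x + 2*PI) = sin x.
Proof. rewrite sin_plus, cos_2PI, sin_2PI. ring. Qed.

Definition wave (w : R -> R) (m n : Z) : R -> R -> R := fun s t => w (IZR m * s + IZR n * t).

Lemma continuity_2d_wave w m n : continuity w -> continuity_2d (wave w m n).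
Proof. intros Hw x y. apply continuity_1d_2d_pt_comp; [apply Hw|apply continuity_2d_pt_lin]. Qed.

Lemma periodic_2d_wave w m n : (forall x, w (x + 2*PI) = w x) -> periodic_2d (wave w m n).
Proof.
  intros Hw s t. unfold wave. split.
  - rewrite <- (periodic_IZR w Hw m (IZR m * s + IZR n * t)). f_equal. ring.
  - rewrite <- (periodic_IZR w Hw n (IZR m * s + IZR n * t)). f_equal. ring.
Qed.

Definition fourier_re (f : cfun) (m n : Z) : R -> R -> R := fun s t =>
  fst (f s t) * wave cos m n s t + snd (f s t) * wave sin m n s t.

Definition fourier_im (f : cfun) (m n : Z) : R -> R -> R := fun s t =>
  snd (f s t) * wave cos m n s t - fst (f s t) * wave sin m n s t.

Lemma fourier_zero_iff f m n :
  fourier_zero f m n <-> Rint2 (fourier_re f m n) 0 /\ Rint2 (fourier_im f m n) 0.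
Proof. reflexivity. Qed.

Lemma continuity_2d_fourier f m n : continuous2 f ->
  continuity_2d (fourier_re f m n) /\ continuity_2d (fourier_im f m n).
Proof.
  intros Hf. apply continuous2_iff in Hf as [Hu Hv].
  assert (Hc := continuity_2d_wave cos m n continuity_cos).
  assert (Hs := continuity_2d_wave sin m n continuity_sin).
  split; intros x y.
  - apply continuity_2d_pt_plus; apply continuity_2d_pt_mult; auto.
  - apply continuity_2d_pt_minus; apply continuity_2d_pt_mult; auto.
Qed.

Lemma periodic_2d_fourier f m n : periodic2 f ->
  periodic_2d (fourier_re f m n) /\ periodic_2d (fourier_im f m n).
Proof.
  intros Hf. assert (Hc := periodic_2d_wave cos m n cos_plus_2PI).
  assert (Hs := periodic_2d_wave sin m n sin_plus_2PI).
  split; intros s t; destruct (Hf s t) as [F1 F2]; destruct (Hc s t) as [C1 C2];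
    destruct (Hs s t) as [S1 S2]; unfold fourier_re, fourier_im;
    rewrite ?F1, ?F2, ?C1, ?C2, ?S1, ?S2; auto.
Qed.

Lemma fourier_zero_RInt_square f m n : in_CT2 f ->
  fourier_zero f m n <-> RInt_square (fourier_re f m n) = 0 /\ RInt_square (fourier_im f m n) = 0.
Proof.
  intros [_ Hf]. destruct (continuity_2d_fourier f m n Hf) as [Hre Him].
  rewrite fourier_zero_iff, !Rint2_RInt_square by assumption.
  split; intros [H1 H2]; split; auto.
Qed.

Lemma in_CT2_piA A f : in_CT2 f -> in_CT2 (piA A f).
Proof.
  intros [Hper Hc]. split.
  - apply (periodic_2d_lin_subst A f Hper).
  - apply continuous2_iff in Hc as [Hu Hv].
    apply continuous2_iff.
    split; [exact (continuity_2d_lin_subst A _ Hu)|exact (continuity_2d_lin_subst A _ Hv)].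
Qed.

Lemma fourier_zero_piA A f m n : in_GL2Z A -> in_CT2 f -> fourier_zero f m n ->
  fourier_zero (piA A f) (m * m11 A + n * m21 A) (m * m12 A + n * m22 A).
Proof.
  intros HA Hf. assert (Hinv := RInt_square_invariant_GL2Z A HA).
  pose proof Hf as [Hper Hc].
  destruct (continuity_2d_fourier f m n Hc) as [Cre Cim].
  destruct (periodic_2d_fourier f m n Hper) as [Pre Pim].
  assert (Hwave : forall w s t, wave w (m * m11 A + n * m21 A) (m * m12 A + n * m22 A) s t
                           = lin_subst A (wave w m n) s t).
  { intros w s t. unfold wave, lin_subst. rewrite !plus_IZR, !mult_IZR. f_equal. ring. }
  rewrite !fourier_zero_RInt_square by (try apply in_CT2_piA; split; assumption).
  rewrite <- (Hinv _ Cre Pre), <- (Hinv _ Cim Pim).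
  intros [H1 H2]. split; [rewrite <- H1|rewrite <- H2]; apply RInt_square_ext; intros s t;
    unfold fourier_re, fourier_im; rewrite !Hwave; reflexivity.
Qed.

Lemma mdet_sqr_GL2Z A : in_GL2Z A -> (mdet A * mdet A = 1)%Z.
Proof. intros [H|H]; rewrite H; reflexivity. Qed.

Lemma mmul_minv_l A : in_GL2Z A -> mmul (minv A) A = mid.
Proof.
  intros H. apply mdet_sqr_GL2Z in H. destruct A as [a b c d].
  unfold mmul, minv, mid, mdet in *; cbv zeta in *; cbn [m11 m12 m21 m22] in *. f_equal; nia.
Qed.

Lemma mmul_minv_r A : in_GL2Z A -> mmul A (minv A) = mid.
Proof.
  intros H. apply mdet_sqr_GL2Z in H. destruct A as [a b c d].
  unfold mmul, minv, mid, mdet in *; cbv zeta in *; cbn [m11 m12 m21 m22] in *. f_equal; nia.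
Qed.

Lemma mdet_mmul A B : mdet (mmul A B) = (mdet A * mdet B)%Z.
Proof. destruct A as [a b c d], B as [a2 b2 c2 d2]. unfold mdet, mmul; cbn [m11 m12 m21 m22]. ring. Qed.

Lemma mdet_minv A : mdet (minv A) = (mdet A * mdet A * mdet A)%Z.
Proof. destruct A as [a b c d]. unfold minv, mdet; cbv zeta; cbn [m11 m12 m21 m22]. ring. Qed.

Lemma GL2Z_mid : in_GL2Z mid.
Proof. left. reflexivity. Qed.

Lemma GL2Z_mmul A B : in_GL2Z A -> in_GL2Z B -> in_GL2Z (mmul A B).
Proof. unfold in_GL2Z. rewrite mdet_mmul. intros [-> | ->] [-> | ->]; simpl; auto. Qed.

Lemma GL2Z_minv A : in_GL2Z A -> in_GL2Z (minv A).
Proof. unfold in_GL2Z. rewrite mdet_minv. intros [-> | ->]; simpl; auto. Qed.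

Lemma GL2Z_mpow_nat A k : in_GL2Z A -> in_GL2Z (mpow_nat A k).
Proof. intros H. induction k; simpl; auto using GL2Z_mid, GL2Z_mmul. Qed.

Lemma GL2Z_mzpow A n : in_GL2Z A -> in_GL2Z (mzpow A n).
Proof. intros H. destruct n; simpl; auto using GL2Z_mid, GL2Z_mpow_nat, GL2Z_minv. Qed.

Definition eigvec (al : R) (A : mat2) (l : R) : Prop :=
  IZR (m11 A) + al * IZR (m12 A) = l /\ IZR (m21 A) + al * IZR (m22 A) = l * al.

Section Eigvec.
Variable al : R.

Lemma eigvec_mid : eigvec al mid 1.
Proof. unfold eigvec, mid; simpl. split; ring. Qed.

Lemma eigvec_mmul A B l mu : eigvec al A l -> eigvec al B mu -> eigvec al (mmul A B) (l * mu).
Proof.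
  destruct A as [a b c d], B as [a' b' c' d']. unfold eigvec, mmul; cbn [m11 m12 m21 m22].
  rewrite !plus_IZR, !mult_IZR. intros [<- Hc] [<- Hc'].
  replace (IZR c) with ((IZR a + al * IZR b) * al - al * IZR d) by lra.
  replace (IZR c') with ((IZR a' + al * IZR b') * al - al * IZR d') by lra.
  split; ring.
Qed.

Lemma eigvec_minv A l : in_GL2Z A -> eigvec al A l -> l <> 0 -> eigvec al (minv A) (/ l).
Proof.
  intros HA [Hl1 Hl2] Hl. apply mdet_sqr_GL2Z in HA. destruct A as [a b c d].
  unfold eigvec, minv, mdet in *; cbv zeta; cbn [m11 m12 m21 m22] in *.
  apply (f_equal IZR) in HA. rewrite !mult_IZR, minus_IZR, !mult_IZR in HA.
  rewrite !opp_IZR, !mult_IZR, minus_IZR, !mult_IZR.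
  assert (Hc : IZR c = (IZR a + al * IZR b) * al - al * IZR d)
    by (rewrite Hl1, <- Hl2; ring).
  rewrite Hc in HA |- *. clear Hl2 Hc.
  set (e := IZR a * IZR d - IZR b * ((IZR a + al * IZR b) * al - al * IZR d)) in *.
  assert (He : e = l * (IZR d - al * IZR b)) by (unfold e; rewrite <- Hl1; ring).
  assert (HeD : e * (IZR d - al * IZR b) = / l).
  { apply (Rmult_eq_reg_l l); auto. rewrite Rinv_r, <- HA by exact Hl.
    rewrite He at 2. ring. }
  split; rewrite <- HeD; ring.
Qed.

Lemma eigvec_mpow_nat A l k : eigvec al A l -> eigvec al (mpow_nat A k) (l ^ k).
Proof. intros H. induction k; simpl; auto using eigvec_mid, eigvec_mmul. Qed.

Lemma eigvec_mzpow A l n : in_GL2Z A -> eigvec al A l -> l <> 0 ->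
  eigvec al (mzpow A n) (powerRZ l n).
Proof.
  intros HA He Hl. destruct n; simpl.
  - apply eigvec_mid.
  - apply eigvec_mpow_nat; auto.
  - rewrite <- pow_inv. apply eigvec_mpow_nat, eigvec_minv; auto.
Qed.

Lemma eigvec_linear_form A l m n : eigvec al A l ->
  IZR (m11 A * m + m21 A * n) + al * IZR (m12 A * m + m22 A * n) = l * (IZR m + al * IZR n).
Proof.
  intros [<- Hc]. rewrite !plus_IZR, !mult_IZR.
  replace (IZR (m21 A)) with ((IZR (m11 A) + al * IZR (m12 A)) * al - al * IZR (m22 A)) by lra.
  ring.
Qed.

End Eigvec.

Lemma in_A_piA al A l f : in_GL2Z A -> eigvec al A l -> 0 < l ->
  in_A al f -> in_A al (piA A f).
Proof.
  intros HA He Hl [Hf Hfz]. split; [apply in_CT2_piA, Hf|]. intros m n Hmn.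
  set (B := minv A).
  set (m' := (m11 B * m + m21 B * n)%Z). set (n' := (m12 B * m + m22 B * n)%Z).
  assert (Hfz' : fourier_zero f m' n').
  { apply Hfz. assert (HB : eigvec al B (/ l)) by (apply eigvec_minv; auto; lra).
    unfold m', n'. rewrite (eigvec_linear_form al B (/ l)) by exact HB.
    apply Rmult_lt_reg_l with l; [lra|]. rewrite <- Rmult_assoc, Rinv_r by lra. lra. }
  assert (Hrow : (m' * m11 A + n' * m21 A = m)%Z /\ (m' * m12 A + n' * m22 A = n)%Z).
  { assert (BA := mmul_minv_l A HA). fold B in BA. unfold m', n'. split.
    - transitivity (m * m11 (mmul B A) + n * m21 (mmul B A))%Z; [simpl; ring|].
      rewrite BA. simpl. ring.
    - transitivity (m * m12 (mmul B A) + n * m22 (mmul B A))%Z; [simpl; ring|].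
      rewrite BA. simpl. ring. }
  destruct Hrow as [Em En]. rewrite <- Em, <- En. apply fourier_zero_piA; auto.
Qed.

Lemma piA_mmul A B g : piA A (piA B g) = piA (mmul B A) g.
Proof. exact (eq_sym (lin_subst_mmul B A g)). Qed.

Lemma piA_mid g : piA mid g = g.
Proof. exact (lin_subst_mid g). Qed.

Lemma restricts_iso_auto_of_eigvec al A l : in_GL2Z A -> eigvec al A l -> 0 < l ->
  restricts_iso_auto al A.
Proof.
  intros HA He Hl.
  assert (HB : eigvec al (minv A) (/ l)) by (apply eigvec_minv; auto; lra).
  assert (Hinv : forall g, piA A (piA (minv A) g) = g).
  { intros g. rewrite piA_mmul, mmul_minv_l by exact HA. apply piA_mid. }
  split; [|split].
  - intros f. apply (in_A_piA al A l); auto.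
  - intros g Hg. exists (piA (minv A) g). split; [|apply Hinv].
    apply (in_A_piA al (minv A) (/ l)); auto using GL2Z_minv, Rinv_0_lt_compat.
  - intros f _ M. split.
    + intros H s t. apply H.
    + intros H s t. rewrite <- (piA_mid f), <- (mmul_minv_r A HA), <- piA_mmul. apply H.
Qed.

Section WaveIntegral.
Variables w W : R -> R.
Hypothesis W_deriv : forall x, is_derive W x (w x).
Hypothesis w_cont : continuity w.
Hypothesis W_per : forall x, W (x + 2*PI) = W x.

Lemma continuity_comp_affine a c : continuity (fun s => w (a * s + c)).
Proof.
  intros x. apply (continuity_pt_comp (fun s => a * s + c) w); [|apply w_cont].
  apply continuity_pt_plus; [apply continuity_pt_scal, continuity_pt_id|].
  apply continuity_pt_const. intros ? ?. reflexivity.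
Qed.

(* w (a s + c) has the 2 PI-periodic primitive W (a s + c) / a. *)
Lemma RInt_wave_zero a c : a <> 0%Z -> RInt (fun s => w (IZR a * s + c)) 0 (2*PI) = 0.
Proof.
  intros Ha. apply not_0_IZR in Ha. apply is_RInt_unique.
  set (F := fun s => / IZR a * W (IZR a * s + c)).
  assert (E : minus (F (2*PI)) (F 0) = 0).
  { unfold F, minus, plus, opp; simpl.
    replace (IZR a * (2*PI) + c) with (c + 2*PI*IZR a) by ring.
    rewrite (periodic_IZR W W_per), Rmult_0_r, Rplus_0_l. ring. }
  rewrite <- E at 2.
  apply (is_RInt_derive (V:=R_CompleteNormedModule)).
  - intros x _. unfold F.
    replace (w (IZR a * x + c)) with (/ IZR a * (IZR a * w (IZR a * x + c))) by (field; auto).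
    apply (is_derive_scal (fun s => W (IZR a * s + c))).
    apply (is_derive_comp W (fun s => IZR a * s + c)); [apply W_deriv|].
    auto_derive; auto; ring.
  - intros x _. apply continuity_pt_filterlim, continuity_comp_affine.
Qed.

Lemma RInt_square_wave_zero a b : (a <> 0 \/ b <> 0)%Z -> RInt_square (wave w a b) = 0.
Proof.
  intros Hab. unfold RInt_square, wave. destruct (Z.eq_dec a 0) as [->|Ha].
  - destruct Hab as [Hab|Hb]; [congruence|].
    rewrite (RInt_ext _ (fun t => scal (2*PI) (w (IZR b * t + 0)))).
    + rewrite (RInt_scal (V:=R_CompleteNormedModule)) by apply ex_RInt_continuity, continuity_comp_affine.
      rewrite RInt_wave_zero by exact Hb. apply (scal_zero_r (V:=R_NormedModule)).
    + intros t _. rewrite (RInt_ext _ (fun _ => w (IZR b * t + 0))), RInt_const.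
      * rewrite Rminus_0_r. reflexivity.
      * intros s _. f_equal. simpl. ring.
  - rewrite (RInt_ext _ (fun _ => 0)), RInt_const; [apply (scal_zero_r (V:=R_NormedModule))|].
    intros t _. apply RInt_wave_zero, Ha.
Qed.

End WaveIntegral.

Definition character (j k : Z) : cfun := fun s t => (wave cos j k s t, wave sin j k s t).

Lemma in_CT2_character j k : in_CT2 (character j k).
Proof.
  split.
  - intros s t. destruct (periodic_2d_wave cos j k cos_plus_2PI s t) as [C1 C2].
    destruct (periodic_2d_wave sin j k sin_plus_2PI s t) as [S1 S2].
    unfold character. rewrite C1, C2, S1, S2. split; reflexivity.
  - apply continuous2_iff.
    split; [apply continuity_2d_wave, continuity_cos|apply continuity_2d_wave, continuity_sin].
Qed.

Lemma in_A_character al j k : 0 <= IZR j + al * IZR k -> in_A al (character j k).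
Proof.
  intros Hjk. split; [apply in_CT2_character|]. intros m n Hmn.
  assert (Hne : (j - m <> 0 \/ k - n <> 0)%Z).
  { destruct (Z.eq_dec j m); destruct (Z.eq_dec k n); try lia. subst. lra. }
  assert (Harg : forall s t, IZR j * s + IZR k * t - (IZR m * s + IZR n * t)
                         = IZR (j - m) * s + IZR (k - n) * t).
  { intros s t. rewrite !minus_IZR. ring. }
  apply fourier_zero_RInt_square; [apply in_CT2_character|]. split.
  - rewrite <- (RInt_square_wave_zero cos sin) with (a := (j - m)%Z) (b := (k - n)%Z);
      auto using continuity_cos, sin_plus_2PI.
    + apply RInt_square_ext. intros s t. unfold fourier_re, character, wave; simpl.
      rewrite <- Harg, cos_minus. ring.
    + intros x. auto_derive; auto; ring.
  - rewrite <- (RInt_square_wave_zero sin (fun x => - cos x)) with (a := (j - m)%Z) (b := (k - n)%Z);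
      auto using continuity_sin.
    + apply RInt_square_ext. intros s t. unfold fourier_im, character, wave; simpl.
      rewrite <- Harg, sin_minus. ring.
    + intros x. auto_derive; auto; ring.
    + intros x. rewrite cos_plus_2PI. reflexivity.
Qed.

Lemma RInt_square_one : RInt_square (fun _ _ => 1) = 4 * PI * PI.
Proof.
  unfold RInt_square. rewrite (RInt_ext _ (fun _ => 2*PI)).
  - rewrite RInt_const. unfold scal; simpl; unfold mult; simpl. ring.
  - intros t _. rewrite RInt_const. unfold scal; simpl; unfold mult; simpl. ring.
Qed.

(* pi(A) sends the character (j, k) to the character (a j + c k, b j + d k); the latter
   has Fourier coefficient 1 at its own frequency. *)
Lemma halfplane_of_preserves al A :
  (forall f, in_A al f -> in_A al (piA A f)) ->
  forall j k, 0 <= IZR j + al * IZR k ->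
  0 <= IZR (m11 A * j + m21 A * k) + al * IZR (m12 A * j + m22 A * k).
Proof.
  intros Hpres j k Hjk.
  set (j' := (m11 A * j + m21 A * k)%Z). set (k' := (m12 A * j + m22 A * k)%Z).
  destruct (Rle_or_lt 0 (IZR j' + al * IZR k')) as [H|Hneg]; [exact H|exfalso].
  destruct (Hpres _ (in_A_character al j k Hjk)) as [HC Hfz].
  destruct (proj1 (fourier_zero_RInt_square _ _ _ HC) (Hfz _ _ Hneg)) as [Hre _].
  rewrite (RInt_square_ext _ (fun _ _ => 1)), RInt_square_one in Hre.
  - assert (HPI := PI_RGT_0). nra.
  - intros s t. unfold fourier_re, piA, character, wave; simpl.
    replace (IZR j * (IZR (m11 A) * s + IZR (m12 A) * t) + IZR k * (IZR (m21 A) * s + IZR (m22 A) * t))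
      with (IZR j' * s + IZR k' * t) by (unfold j', k'; rewrite !plus_IZR, !mult_IZR; ring).
    rewrite <- (sin2_cos2 (IZR j' * s + IZR k' * t)). unfold Rsqr. ring.
Qed.

Lemma irrational_lin_indep al x y : irrational al -> IZR x + al * IZR y = 0 -> x = 0%Z /\ y = 0%Z.
Proof.
  intros Hi H. destruct (Z.eq_dec y 0) as [->|Hy].
  - split; auto. apply eq_IZR_R0. simpl in H. lra.
  - exfalso. apply Hi. exists (- x)%Z, y. split; auto.
    apply not_0_IZR in Hy. rewrite opp_IZR. field_simplify_eq; [lra|auto].
Qed.

(* If ga /= be al, choosing j = ceil(- al k) keeps j + al k in [0, 1] while
   be j + ga k = be (j + al k) + (ga - be al) k is unbounded below in k. *)
Lemma halfplane_functional_proportional al be ga :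
  (forall j k : Z, 0 <= IZR j + al * IZR k -> 0 <= be * IZR j + ga * IZR k) -> ga = be * al.
Proof.
  intros Key. destruct (Req_dec ga (be * al)) as [E|E]; auto. exfalso.
  set (de := ga - be * al). assert (Hde : 0 < Rabs de) by (apply Rabs_pos_lt; unfold de; lra).
  assert (Hk : forall k, - Rabs be <= de * IZR k).
  { intros k. destruct (archimed (- (al * IZR k))) as [U1 U2].
    set (j := up (- (al * IZR k))) in *.
    specialize (Key j k ltac:(lra)).
    replace (be * IZR j + ga * IZR k) with (be * (IZR j + al * IZR k) + de * IZR k) in Key
      by (unfold de; ring).
    destruct (Rle_or_lt 0 be).
    - rewrite Rabs_right by lra. nra.
    - rewrite Rabs_left by lra. nra. }
  destruct (archimed (Rabs be / Rabs de)) as [V1 _].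
  set (K := up (Rabs be / Rabs de)) in *.
  assert (HK : Rabs be < Rabs de * IZR K).
  { apply (Rmult_lt_compat_l (Rabs de)) in V1; auto.
    replace (Rabs de * (Rabs be / Rabs de)) with (Rabs be) in V1 by (field; lra). lra. }
  destruct (Rle_or_lt 0 de).
  - specialize (Hk (- K)%Z). rewrite opp_IZR in Hk. rewrite (Rabs_right de) in HK by lra. lra.
  - specialize (Hk K). rewrite (Rabs_left de) in HK by lra. lra.
Qed.

Lemma eigvec_of_halfplane al A : irrational al -> in_GL2Z A ->
  (forall j k, 0 <= IZR j + al * IZR k ->
     0 <= IZR (m11 A * j + m21 A * k) + al * IZR (m12 A * j + m22 A * k)) ->
  eigvec al A (IZR (m11 A) + al * IZR (m12 A)) /\ 0 < IZR (m11 A) + al * IZR (m12 A).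
Proof.
  intros Hi HA H. destruct A as [a b c d]; cbn [m11 m12 m21 m22] in *.
  set (be := IZR a + al * IZR b). set (ga := IZR c + al * IZR d).
  assert (Key : forall j k, 0 <= IZR j + al * IZR k -> 0 <= be * IZR j + ga * IZR k).
  { intros j k Hjk. specialize (H j k Hjk). rewrite !plus_IZR, !mult_IZR in H. unfold be, ga. lra. }
  assert (Hga : ga = be * al) by exact (halfplane_functional_proportional al be ga Key).
  split; [split; [reflexivity|exact Hga]|].
  destruct (Key 1%Z 0%Z) as [Hbe|Hbe]; [simpl; lra|simpl in Hbe; lra|exfalso].
  destruct (irrational_lin_indep al a b Hi) as [-> ->]; [fold be; lra|].
  destruct (irrational_lin_indep al c d Hi) as [-> ->]; [fold ga; rewrite Hga; nra|].
  destruct HA as [HA|HA]; discriminate.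
Qed.

Lemma powerRZ_bracket eps l : 1 < eps -> 0 < l ->
  exists n : Z, powerRZ eps n <= l < powerRZ eps (n + 1).
Proof.
  intros He Hl. assert (Hle : 0 < ln eps) by (rewrite <- ln_1; apply ln_increasing; lra).
  set (t := ln l / ln eps). destruct (archimed t) as [U1 U2].
  exists (up t - 1)%Z. rewrite !powerRZ_Rpower by lra. unfold Rpower.
  rewrite <- (exp_ln l) by exact Hl.
  replace (up t - 1 + 1)%Z with (up t) by ring. rewrite minus_IZR.
  assert (Et : t * ln eps = ln l) by (unfold t; field; lra).
  split.
  - assert (Hle' : (IZR (up t) - 1) * ln eps <= ln l) by (rewrite <- Et; nra).
    destruct Hle' as [Hlt|Heq]; [left; apply exp_increasing, Hlt|right; rewrite Heq; reflexivity].
  - apply exp_increasing. rewrite <- Et. nra.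
Qed.

Section Pell.
Variables (p q : Z) (al : R).
Hypothesis al_irr : irrational al.
Hypothesis al_pos : 0 < al.
Hypothesis al_sqr : al * al * IZR q = IZR p.
Hypothesis q_pos : (0 < q)%Z.
Hypothesis pq_coprime : Z.gcd p q = 1%Z.

Definition pell_matrix (x y : Z) : mat2 := Mat2 x (q * y) (p * y) x.

(* x + y sqrt(pq), since al q = sqrt(pq). *)
Definition pell_unit (x y : Z) : R := IZR x + al * IZR q * IZR y.

Lemma mdet_pell_matrix x y : mdet (pell_matrix x y) = (x * x - p * q * y * y)%Z.
Proof. unfold mdet, pell_matrix; cbn [m11 m12 m21 m22]. ring. Qed.

Lemma eigvec_pell_matrix x y : eigvec al (pell_matrix x y) (pell_unit x y).
Proof.
  unfold eigvec, pell_matrix, pell_unit; cbn [m11 m12 m21 m22].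
  rewrite !mult_IZR, <- al_sqr. split; ring.
Qed.

Lemma eigvec_shape A l : eigvec al A l -> m22 A = m11 A /\ (q * m21 A = p * m12 A)%Z.
Proof.
  destruct A as [a b c d]. unfold eigvec; cbn [m11 m12 m21 m22]. intros [<- Hc].
  destruct (irrational_lin_indep al (q * c - p * b) (q * (d - a)) al_irr) as [E1 E2].
  - rewrite !minus_IZR, !mult_IZR, !minus_IZR.
    replace (IZR c) with ((IZR a + al * IZR b) * al - al * IZR d) by lra.
    rewrite <- al_sqr. ring.
  - split; [|lia]. apply Z.mul_eq_0 in E2. lia.
Qed.

Lemma eigvec_inj A B l : eigvec al A l -> eigvec al B l -> A = B.
Proof.
  intros HA HB. destruct (eigvec_shape A l HA) as [FA1 FA2].
  destruct (eigvec_shape B l HB) as [FB1 FB2].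
  destruct A as [a b c d], B as [a' b' c' d']. cbn [m11 m12 m21 m22] in *.
  destruct HA as [HA _], HB as [HB _]. cbn [m11 m12] in HA, HB.
  destruct (irrational_lin_indep al (a - a') (b - b') al_irr) as [E1 E2].
  { rewrite !minus_IZR. lra. }
  assert (a = a') by lia. assert (b = b') by lia. subst.
  assert (c = c') by nia. subst. reflexivity.
Qed.

Lemma eigvec_pell A l : eigvec al A l -> exists x y, A = pell_matrix x y /\ l = pell_unit x y.
Proof.
  intros He. destruct (eigvec_shape A l He) as [F1 F2].
  destruct (Z.gauss q p (m12 A)) as [y Hy]; [exists (m21 A); lia|rewrite Z.gcd_comm; exact pq_coprime|].
  exists (m11 A), y.
  assert (Hc : m21 A = (p * y)%Z) by (apply (Z.mul_cancel_l _ _ q); [lia|rewrite F2, Hy; ring]).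
  destruct He as [He _]. destruct A as [a b c d]; cbn [m11 m12 m21 m22] in *. subst. split.
  - unfold pell_matrix. f_equal; ring.
  - unfold pell_unit. rewrite mult_IZR. ring.
Qed.

(* Every unit u = x + y sqrt(pq) > 1 of norm e = +-1 has x, y > 0, because its conjugate
   u' = e / u lies in (-1, 1); minimality of x1 then gives x1 <= x and y1 <= y. *)
Lemma fundamental_pell_unit_min e x1 y1 x y : fundamental (p * q) e x1 y1 ->
  (e = 1 \/ e = -1)%Z -> (x * x - p * q * y * y = e)%Z -> 1 < pell_unit x y ->
  pell_unit x1 y1 <= pell_unit x y.
Proof.
  intros [Hx1 [Hy1 [Hf1 Hmin]]] He Hn Hu. unfold pell_unit in *.
  assert (Hq : 0 < IZR q) by (apply IZR_lt; auto).
  assert (Hs : 0 < al * IZR q) by nra.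
  assert (Hp : (0 < p)%Z) by (apply lt_IZR; rewrite <- al_sqr; nra).
  assert (Hconj : (IZR x + al * IZR q * IZR y) * (IZR x - al * IZR q * IZR y) = IZR e).
  { rewrite <- Hn, !minus_IZR, !mult_IZR, <- al_sqr. ring. }
  assert (Hu' : -1 < IZR x - al * IZR q * IZR y < 1)
    by (destruct He as [-> | ->]; simpl in Hconj; split; nra).
  assert (Hx : (0 < x)%Z) by (apply lt_IZR; lra).
  assert (Hy : (0 < y)%Z) by (apply lt_IZR; nra).
  assert (Hxx : (x1 <= x)%Z) by (apply (Hmin x y); auto).
  assert (Hyy : (y1 <= y)%Z).
  { destruct (Z.le_gt_cases y1 y) as [|Hlt]; auto.
    assert ((x1 * x1 <= x * x)%Z) by nia. assert ((y * y < y1 * y1)%Z) by nia.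
    assert ((p * q * (y * y) < p * q * (y1 * y1))%Z) by (apply Z.mul_lt_mono_pos_l; lia). lia. }
  apply IZR_le in Hxx. apply IZR_le in Hyy. nra.
Qed.

Lemma fundamental_pell_unit_gt1 e x1 y1 : fundamental (p * q) e x1 y1 -> 1 < pell_unit x1 y1.
Proof.
  intros [Hx [Hy _]]. unfold pell_unit.
  assert (1 <= IZR x1) by (apply IZR_le; lia).
  assert (0 < al * IZR q * IZR y1) by (repeat apply Rmult_lt_0_compat; auto; apply IZR_lt; lia).
  lra.
Qed.

Lemma eigvec_pow_of_no_unit_between M eps : in_GL2Z M -> eigvec al M eps -> 1 < eps ->
  (forall C mu, in_GL2Z C -> eigvec al C mu -> 1 < mu < eps -> False) ->
  forall A l, in_GL2Z A -> eigvec al A l -> 0 < l -> exists n, A = mzpow M n.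
Proof.
  intros HM HeM Heps Hgap A l HA HeA Hl.
  destruct (powerRZ_bracket eps l Heps Hl) as [n [H1 H2]]. exists n.
  assert (Hne : eps <> 0) by lra.
  rewrite powerRZ_add, powerRZ_1 in H2 by exact Hne.
  set (P := powerRZ eps n) in *. assert (HP : 0 < P) by (apply powerRZ_lt; lra).
  apply (eigvec_inj _ _ l); auto.
  replace l with P; [apply eigvec_mzpow; auto|].
  destruct (Req_dec P l) as [E|E]; auto. exfalso.
  apply (Hgap (mmul A (mzpow M (- n))) (l * / P)).
  - apply GL2Z_mmul, GL2Z_mzpow; auto.
  - apply eigvec_mmul; auto. unfold P. rewrite <- powerRZ_neg'. apply eigvec_mzpow; auto.
  - split; apply (Rmult_lt_reg_r P); auto; rewrite Rmult_assoc, Rinv_l; lra.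
Qed.

(* For e = -1 a unit of norm +1 in (1, eps) would give the unit eps / mu of norm -1,
   again in (1, eps). *)
Lemma no_pell_unit_between (e x1 y1 : Z) :
  (e = 1 /\ ~ exists x y, x * x - p * q * y * y = -1)%Z \/ e = (-1)%Z ->
  fundamental (p * q) e x1 y1 ->
  forall C mu, in_GL2Z C -> eigvec al C mu -> 1 < mu < pell_unit x1 y1 -> False.
Proof.
  intros He Hf C mu HC HeC [Hmu1 Hmu2].
  assert (He' : (e = 1 \/ e = -1)%Z) by tauto.
  assert (Hnorm : forall x y, mdet (pell_matrix x y) = e -> 1 < pell_unit x y ->
                         pell_unit x y < pell_unit x1 y1 -> False).
  { intros x y Hd Hu Hlt. rewrite mdet_pell_matrix in Hd.
    assert (H := fundamental_pell_unit_min e x1 y1 x y Hf He' Hd Hu). lra. }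
  destruct (eigvec_pell C mu HeC) as [x [y [-> ->]]].
  destruct (Z.eq_dec (mdet (pell_matrix x y)) e) as [Hd|Hd]; [exact (Hnorm x y Hd Hmu1 Hmu2)|].
  destruct He as [[E Hno]|E]; subst e.
  - apply Hno. exists x, y. rewrite <- mdet_pell_matrix. destruct HC; tauto.
  - set (M := pell_matrix x1 y1). set (eps := pell_unit x1 y1) in *.
    assert (HdM : mdet M = (-1)%Z) by (unfold M; rewrite mdet_pell_matrix; apply Hf).
    assert (HeD : eigvec al (mmul M (minv (pell_matrix x y))) (eps * / pell_unit x y)).
    { apply eigvec_mmul; [apply eigvec_pell_matrix|].
      apply eigvec_minv; [exact HC|apply eigvec_pell_matrix|lra]. }
    destruct (eigvec_pell _ _ HeD) as [x' [y' [ED Emu]]].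
    apply (Hnorm x' y').
    + rewrite <- ED, mdet_mmul, mdet_minv, HdM. destruct HC as [H|H]; rewrite H in *; lia.
    + rewrite <- Emu. apply (Rmult_lt_reg_r (pell_unit x y)); [lra|].
      rewrite Rmult_assoc, Rinv_l; lra.
    + rewrite <- Emu. apply (Rmult_lt_reg_r (pell_unit x y)); [lra|].
      rewrite Rmult_assoc, Rinv_l; nra.
Qed.

Lemma restricts_iso_auto_iff_mzpow (e x1 y1 : Z) A :
  (e = 1 /\ ~ exists x y, x * x - p * q * y * y = -1)%Z \/ e = (-1)%Z ->
  fundamental (p * q) e x1 y1 -> in_GL2Z A ->
  restricts_iso_auto al A <-> exists n : Z, A = mzpow (pell_matrix x1 y1) n.
Proof.
  intros He Hf HA.
  assert (HM : in_GL2Z (pell_matrix x1 y1)).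
  { unfold in_GL2Z. rewrite mdet_pell_matrix. destruct Hf as [_ [_ [-> _]]]. lia. }
  assert (Heps := fundamental_pell_unit_gt1 e x1 y1 Hf).
  split.
  - intros [Hpres _].
    destruct (eigvec_of_halfplane al A al_irr HA (halfplane_of_preserves al A Hpres)) as [HeA Hl].
    exact (eigvec_pow_of_no_unit_between _ _ HM (eigvec_pell_matrix x1 y1) Heps
             (no_pell_unit_between e x1 y1 He Hf) A _ HA HeA Hl).
  - intros [n ->]. apply (restricts_iso_auto_of_eigvec al _ (powerRZ (pell_unit x1 y1) n)).
    + apply GL2Z_mzpow, HM.
    + apply eigvec_mzpow; [exact HM|apply eigvec_pell_matrix|lra].
    + apply powerRZ_lt. lra.
Qed.

End Pell.

Theorem mainTheorem15 (p q : Z) (Hp : (0 <= p)%Z) (Hq : (0 < q)%Z)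
  (Hgcd : Z.gcd p q = 1%Z)
  (Hirr : irrational (sqrt (IZR p / IZR q))) :
  ((~ exists x y : Z, (x * x - p * q * y * y = -1)%Z) ->
     forall x1 y1 : Z, fundamental (p * q) 1 x1 y1 ->
     forall A : mat2, in_GL2Z A ->
       (restricts_iso_auto (sqrt (IZR p / IZR q)) A <->
        exists n : Z, A = mzpow (Mat2 x1 (q * y1) (p * y1) x1) n))
  /\
  ((exists x y : Z, (x * x - p * q * y * y = -1)%Z) ->
     forall x1 y1 : Z, fundamental (p * q) (-1) x1 y1 ->
     forall A : mat2, in_GL2Z A ->
       (restricts_iso_auto (sqrt (IZR p / IZR q)) A <->
        exists n : Z, A = mzpow (Mat2 x1 (q * y1) (p * y1) x1) n)).
Proof.
  set (al := sqrt (IZR p / IZR q)) in *.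
  assert (Hq' : 0 < IZR q) by (apply IZR_lt; exact Hq).
  assert (Hpq : 0 <= IZR p / IZR q) by (apply Rdiv_le_0_compat; [apply IZR_le|]; assumption).
  assert (Hal : 0 < al).
  { destruct (sqrt_pos (IZR p / IZR q)) as [H|H]; [exact H|].
    exfalso. apply Hirr. exists 0%Z, 1%Z. split; [lia|]. unfold al. rewrite <- H. field. }
  assert (Hsq : al * al * IZR q = IZR p) by (unfold al; rewrite sqrt_sqrt by exact Hpq; field; lra).
  split.
  - intros Hno x1 y1 Hf A HA.
    apply (restricts_iso_auto_iff_mzpow p q al Hirr Hal Hsq Hq Hgcd 1); auto.
  - intros _ x1 y1 Hf A HA.
    apply (restricts_iso_auto_iff_mzpow p q al Hirr Hal Hsq Hq Hgcd (-1)); auto.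
Qed.
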